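(* Let $n\ge 5$, let $k$ be a positive integer, let $x\in[1,n]$ and let $(i,j)$ be a cell with $i,j\in[1,n]$. There exists a Latin square of order $n$ with inner distance $k$ if and only if there exists a Latin square $(m_{a,b})$ of order $n$ with inner distance $k$ and $m_{i,j}=x$.
   Context: Symbols are $[1,n]$. For $a,b\in[1,n]$, $\mathrm{dist}(a,b)$ is the minimum of the residues of $a-b$ and $b-a$ modulo $n$ (in $[0,n-1]$). A Latin square of order $n$ is an $n\times n$ matrix over $[1,n]$ with each symbol exactly once in every row and column; its inner distance is the minimum of $\mathrm{dist}$ over symbols in horizontally or vertically adjacent cells. *)

From mathcomp Require Import all_boot.
Set Implicit Arguments. Unset Strict Implicit. Unset Printing Implicit Defensive.

(* Symbols [1,n] are represented by 'I_n (symbol s+1 <-> ordinal s);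
   rows/columns [1,n] likewise by 'I_n.  dist is shift-invariant. *)

Definition resdiff (n a b : nat) : nat := (a + n - b) %% n.

Definition sdist (n : nat) (a b : 'I_n) : nat := minn (resdiff n a b) (resdiff n b a).

Definition latin_square (n : nat) (M : 'I_n -> 'I_n -> 'I_n) : Prop :=
  (forall (a : 'I_n) (s : 'I_n), #|[set b : 'I_n | M a b == s]| = 1) /\
  (forall (b : 'I_n) (s : 'I_n), #|[set a : 'I_n | M a b == s]| = 1).

Definition adjacent (n : nat) (c d : 'I_n * 'I_n) : bool :=
  ((c.1 == d.1) && ((c.2.+1 == d.2) || (d.2.+1 == c.2))) ||
  ((c.2 == d.2) && ((c.1.+1 == d.1) || (d.1.+1 == c.1))).

Definition inner_distance_is (n : nat) (M : 'I_n -> 'I_n -> 'I_n) (k : nat) : Prop :=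
  (exists c d, adjacent c d /\ sdist (M c.1 c.2) (M d.1 d.2) = k) /\
  (forall c d, adjacent c d -> k <= sdist (M c.1 c.2) (M d.1 d.2)).

From mathcomp Require Import all_boot all_algebra.
Import GRing.Theory.

Set Implicit Arguments.
Unset Strict Implicit.
Unset Printing Implicit Defensive.

(* Relabelling the symbols of a Latin square by a bijection that preserves
   [sdist] keeps it a Latin square with the same inner distance.  Cyclic
   translations [s |-> s + c] in Z/nZ are such bijections, and a suitable
   [c] moves the entry in cell (i, j) to any prescribed symbol x. *)

Section SymbolRelabelling.

Variables (n : nat) (f : 'I_n -> 'I_n) (M : 'I_n -> 'I_n -> 'I_n).

Lemma latin_square_relabel :
  bijective f -> latin_square M -> latin_square (fun a b => f (M a b)).
Proof.
case=> g fK gK [rowM colM].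
have relabel_eq u s : (f u == s) = (u == g s).
  by rewrite -{1}[s]gK (can_eq fK).
split=> [a s | b s].
- by rewrite -(rowM a (g s)); apply: eq_card => b; rewrite !inE relabel_eq.
- by rewrite -(colM b (g s)); apply: eq_card => a; rewrite !inE relabel_eq.
Qed.

Lemma inner_distance_relabel (k : nat) :
  (forall u v, sdist (f u) (f v) = sdist u v) ->
  inner_distance_is M k -> inner_distance_is (fun a b => f (M a b)) k.
Proof.
move=> f_sdist [[c [d [cd Mcd]]] Mge]; split.
- by exists c, d; rewrite f_sdist.
- by move=> c' d' c'd'; rewrite f_sdist; exact: Mge.
Qed.

End SymbolRelabelling.

Lemma resdiffE (N : nat) (a b : 'I_N.+1) : resdiff N.+1 a b = val (a - b)%R.
Proof.
rewrite /resdiff /= /Zp_add /= modnDmr addnBA //; exact: ltnW (ltn_ord b).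
Qed.

Lemma sdist_addr (N : nat) (c a b : 'I_N.+1) :
  sdist (a + c)%R (b + c)%R = sdist a b.
Proof.
have addrKB (u v : 'I_N.+1) : ((u + c) - (v + c) = u - v)%R.
  by rewrite opprD addrACA subrr addr0.
by rewrite /sdist !resdiffE !addrKB.
Qed.

Lemma addr_bijective (N : nat) (c : 'I_N.+1) : bijective (fun s => (s + c)%R).
Proof. by exists (fun s => (s - c)%R) => s; rewrite ?addrK ?subrK. Qed.

Theorem mainTheorem11 (n k : nat) (x i j : 'I_n) :
  5 <= n -> 0 < k ->
  (exists M : 'I_n -> 'I_n -> 'I_n, latin_square M /\ inner_distance_is M k) <->
  (exists M : 'I_n -> 'I_n -> 'I_n,
      latin_square M /\ inner_distance_is M k /\ M i j = x).
Proof.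
case: n x i j => [|N] x i j _ _; first by case: x.
split; last by case=> M [latM [distM _]]; exists M.
case=> M [latM distM].
pose c : 'I_N.+1 := (x - M i j)%R.
exists (fun a b => M a b + c)%R; split; [|split].
- exact: latin_square_relabel (addr_bijective c) latM.
- exact: inner_distance_relabel (sdist_addr c) distM.
- by rewrite /c addrC subrK.
Qed.
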